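(* Let $G\in\mathcal{C}$, $N\unlhd G$, and let $(H,H,\vartheta)\in\mathcal{L}_N$ have second node $(H_2,A_2,\vartheta_2)$. If $H\unlhd N_G(\ker\vartheta_2)$, then $(H,\ker\vartheta)$ is a strong Shoda pair of $G$.
   Context: All groups are finite. $\mathcal{C}$ is the class of finite groups $G$ such that every subgroup and quotient group of $G$ is either abelian or contains a non-central abelian normal subgroup. $\psi^x(g)=\psi(xgx^{-1})$, $\psi^G$ induced character, $1_N$ trivial character. For $K\unlhd H\le G$: $\widehat H=\frac1{|H|}\sum_{h\in H}h$; $\varepsilon(H,K)=\widehat K$ if $H=K$, else $\prod(\widehat K-\widehat L)$ over $L\unlhd H$ with $L/K$ minimal normal in $H/K$. A strong Shoda pair of $G$ is $(H,K)$ with $K\unlhd H\unlhd N_G(K)$, $H/K$ cyclic and a maximal abelian subgroup of $N_G(K)/K$, and the distinct $G$-conjugates of $\varepsilon(H,K)$ mutually orthogonal. An $N$-linear character triple of $G$ is $(H,A,\vartheta)$ with $H\le G$, $A\unlhd H$, $\vartheta$ a linear character of $A$ invariant in $H$, and $\ker(\vartheta^G)=N$. For $B\unlhd M\le G$ and linear $\lambda$ on $B$, $\widetilde{\operatorname{Lin}}(M|\lambda)$ is the set of linear characters of $M$ whose restriction to $B$ contains $\lambda$ and whose induction to $G$ has kernel $N$. For each triple a normal subgroup $\mathcal{A}=\mathcal{A}_{(H,A,\vartheta)}$ of $H$ is fixed, of maximal order among normal subgroups of $H$ containing $\ker\vartheta$ with abelian quotient by $\ker\vartheta$. $\operatorname{Aut}(\mathbb{C}|\vartheta)\times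 H$ acts on $\widetilde{\operatorname{Lin}}(\mathcal{A}|\vartheta)$ by $(\sigma,h)\cdot\varphi=\sigma\circ\varphi^h$ ($\sigma$ a field automorphism of $\mathbb{C}$ fixing $\mathbb{Q}(\vartheta)$); fix orbit representatives $\mathfrak{Lin}(\mathcal{A}|\vartheta)$. If $H\neq A$, $Cl(H,A,\vartheta)=\{(I_H(\varphi),\mathcal{A},\varphi):\varphi\in\mathfrak{Lin}(\mathcal{A}|\vartheta)\}$, $I_H(\varphi)=\{h\in H:\varphi^h=\varphi\}$; if $H=A$, empty. $\mathcal{G}_N$: directed graph of $N$-linear triples reachable from $(G,N,1_N)$, edges $(u,v)$ whenever $v\in Cl(u)$; each vertex is reached by a unique directed path from the root. $\mathcal{L}_N$: vertices of the form $(H,H,\vartheta)$. For such a leaf with path $v_1=(G,N,1_N),v_2,\dots,v_n=(H,H,\vartheta)$, $v_i$ is its $i$-th node (so the second node is $v_2$, existing when $n\ge2$). *)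

From HB Require Import structures.
From mathcomp Require Import all_boot all_order all_algebra all_fingroup all_solvable all_field all_character.
Set Implicit Arguments.
Unset Strict Implicit.
Unset Printing Implicit Defensive.
Import GRing.Theory Num.Theory.
Local Open Scope group_scope.

Section Defs.
Variable gT : finGroupType.

Definition abelian_or_ncan (T : finGroupType) (X : {group T}) : bool :=
  abelian X ||
  [exists A : {group T}, [&& A <| X, abelian A & ~~ (A \subset 'Z(X))]].

Definition classC (G : {group gT}) : Prop :=
  (forall H : {group gT}, H \subset G -> abelian_or_ncan H) /\
  (forall M : {group gT}, M <| G -> abelian_or_ncan (G / M)%G).

(* ---------- the rational group algebra QG, as functions gT -> rat ---------- *)
Definition gmul (a b : {ffun gT -> rat}) : {ffun gT -> rat} :=
  [ffun g => (\sum_(x : gT) a x * b (x^-1 * g)%g)%R].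
Definition gone : {ffun gT -> rat} := [ffun g : gT => ((g == 1%g)%:R : rat)%R].
Definition ghat (H : {set gT}) : {ffun gT -> rat} :=
  [ffun g => if g \in H then ((#|H|%:R)^-1)%R else 0%R].
(* the conjugate g e g^-1 *)
Definition gconj (e : {ffun gT -> rat}) (g : gT) : {ffun gT -> rat} :=
  [ffun x => e (x ^ g)].

Definition geps (H K : {group gT}) : {ffun gT -> rat} :=
  if H == K then ghat K
  else foldr gmul gone
    [seq (ghat K - ghat (gval L))%R | L : {group gT} <- enum [set L : {group gT} |
        [&& K \subset L, L <| H & minnormal (L / K) (H / K)]]].

Definition strong_Shoda_pair (G H K : {group gT}) : Prop :=
  [/\ K <| H, H <| 'N_G(K), cyclic (H / K),
      [max (H / K)%G of B | (B \subset 'N_G(K) / K) && abelian B] &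
      forall g1 g2, g1 \in G -> g2 \in G ->
        gconj (geps H K) g1 != gconj (geps H K) g2 ->
        gmul (gconj (geps H K) g1) (gconj (geps H K) g2) = 0%R].

Record triple := Triple { tH : {group gT}; tA : {group gT}; ttheta : 'CF(tA) }.

Definition NLinTriple (G N : {group gT}) (t : triple) : Prop :=
  [/\ tH t \subset G, tA t <| tH t, ttheta t \is a linear_char,
      (forall h, h \in tH t -> (ttheta t ^ h)%CF = ttheta t) &
      cfker ('Ind[G] (ttheta t))%R = N].

Definition LinT (G N B M : {group gT}) (lam : 'CF(B)) (phi : 'CF(M)) : Prop :=
  [/\ phi \is a linear_char, ('['Res[B] phi, lam] != 0)%R &
      cfker ('Ind[G] phi)%R = N].

Definition calA_spec (t : triple) (Ac : {group gT}) : Prop :=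
  [/\ Ac <| tH t, cfker (ttheta t) \subset Ac, abelian (Ac / cfker (ttheta t)) &
      forall B : {group gT}, B <| tH t -> cfker (ttheta t) \subset B ->
        abelian (B / cfker (ttheta t)) -> #|B| <= #|Ac|]%N.

(* the orbit relation of Aut(C|theta) x H acting by (sigma,h).phi = sigma o phi^h *)
Definition same_orbit (t : triple) (M : {group gT}) (phi psi : 'CF(M)) : Prop :=
  exists u : {rmorphism algC -> algC},
    (forall a, u (ttheta t a) = ttheta t a) /\
    exists2 h, h \in tH t & psi = cfAut u (phi ^ h)%CF.

Definition reps_spec (G N : {group gT}) (t : triple) (Ac : {group gT})
    (Reps : 'CF(Ac) -> Prop) : Prop :=
  [/\ (forall phi, Reps phi -> LinT G N (ttheta t) phi),
      (forall phi, LinT G N (ttheta t) phi ->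
          exists2 psi, Reps psi & same_orbit t psi phi) &
      (forall psi1 psi2, Reps psi1 -> Reps psi2 ->
          same_orbit t psi1 psi2 -> psi1 = psi2)].

Definition Cl_edge (chA : triple -> {group gT})
    (chL : forall t : triple, 'CF(chA t) -> Prop) (u v : triple) : Prop :=
  tH u != tA u /\
  exists2 phi : 'CF(chA u), chL u phi &
    v = @Triple ('I_(tH u)[phi])%G (chA u) phi.

End Defs.

(* Along the path from the root, each linear character restricts to its
   predecessor and each stabiliser is an inertia group inside the previous one.
   Hence the leaf character theta of H restricts to theta2 on A2, which is
   normal in G, and every element of G normalising H and fixing theta lies in H.
   Put K = ker theta. Since theta is linear, H/K is cyclic. The normaliser
   N_G(K) normalises A2 :&: K = ker theta2, hence H, and an element of N_G(K)
   centralising H/K fixes theta; so H/K is maximal abelian in N_G(K)/K.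
   For g in G \ N_G(K) there is a subgroup Y <= K with Y^g <= H but Y^g not
   contained in K: take Y = K if g normalises ker theta2, and Y = ker theta2
   otherwise, using A2 <| G and A2 :&: K = ker theta2. Then X = K Y^g satisfies
   e e^g = (e hat(X)) e^g for e = epsilon(H,K), and e hat(X) = 0 because X
   contains some L with L/K minimal normal in the abelian group H/K. *)

From HB Require Import structures.
From mathcomp Require Import all_boot all_order all_algebra all_fingroup all_solvable all_field all_character.
From mathcomp Require Import ring.
Import GRing.Theory Num.Theory.
Local Open Scope group_scope.
Set Implicit Arguments.
Unset Strict Implicit.
Unset Printing Implicit Defensive.

Local Notation gprod s := (foldr (@gmul _) (gone _) s).

Section GroupAlgebra.
Variable gT : finGroupType.
Implicit Types (a b c y : {ffun gT -> rat}) (s : seq {ffun gT -> rat}).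

Lemma gmulA a b c : gmul (gmul a b) c = gmul a (gmul b c).
Proof.
apply/ffunP=> g; rewrite !ffunE.
under eq_bigr do rewrite ffunE big_distrl /=.
rewrite exchange_big /=; apply: eq_bigr => x _.
rewrite ffunE big_distrr /= (reindex_inj (mulgI x)) /=.
by apply: eq_bigr => z _; rewrite mulKg mulrA invMg mulgA.
Qed.

Lemma gmul1l a : gmul (gone gT) a = a.
Proof.
apply/ffunP=> g; rewrite ffunE (bigD1 1) //= big1 => [|x nx1].
  by rewrite ffunE eqxx mul1r invg1 mul1g addr0.
by rewrite ffunE (negbTE nx1) mul0r.
Qed.

Lemma gmul1r a : gmul a (gone gT) = a.
Proof.
apply/ffunP=> g; rewrite ffunE (bigD1 g) //= big1 => [|x nxg].
  by rewrite ffunE mulVg eqxx mulr1 addr0.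
by rewrite ffunE -eq_mulVg1 (negbTE nxg) mulr0.
Qed.

Lemma gmul0l a : gmul 0%R a = 0%R.
Proof. by apply/ffunP=> g; rewrite !ffunE big1 // => x _; rewrite ffunE mul0r. Qed.

Lemma gmul0r a : gmul a 0%R = 0%R.
Proof. by apply/ffunP=> g; rewrite !ffunE big1 // => x _; rewrite ffunE mulr0. Qed.

Lemma gmulBl a b c : gmul (a - b)%R c = (gmul a c - gmul b c)%R.
Proof.
apply/ffunP=> g; rewrite !ffunE -sumrB; apply: eq_bigr => x _.
by rewrite !ffunE mulrBl.
Qed.

Lemma gmulBr a b c : gmul a (b - c)%R = (gmul a b - gmul a c)%R.
Proof.
apply/ffunP=> g; rewrite !ffunE -sumrB; apply: eq_bigr => x _.
by rewrite !ffunE mulrBr.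
Qed.

Lemma gconjM a b g : gconj (gmul a b) g = gmul (gconj a g) (gconj b g).
Proof.
apply/ffunP=> x; rewrite !ffunE (reindex_inj (conjg_inj g)) /=.
by apply: eq_bigr => y _; rewrite !ffunE conjMg conjVg.
Qed.

Lemma gconj1 g : gconj (gone gT) g = gone gT.
Proof. by apply/ffunP=> x; rewrite !ffunE conjg_eq1. Qed.

Lemma gconj0 g : gconj (0 : {ffun gT -> rat})%R g = 0%R.
Proof. by apply/ffunP=> x; rewrite !ffunE. Qed.

Lemma gconjB a b g : gconj (a - b)%R g = (gconj a g - gconj b g)%R.
Proof. by apply/ffunP=> x; rewrite !ffunE. Qed.

Lemma gconjJ a g h : gconj (gconj a g) h = gconj a (h * g).
Proof. by apply/ffunP=> z; rewrite !ffunE conjgM. Qed.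

Lemma gconj_ghat (X : {set gT}) g : gconj (ghat X) g = ghat (X :^ g^-1).
Proof. by apply/ffunP=> x; rewrite !ffunE cardJg mem_conjgV. Qed.

Lemma ghatM (X Y : {group gT}) : gmul (ghat X) (ghat Y) = ghat (X * Y).
Proof.
apply/ffunP=> z; rewrite !ffunE.
rewrite (eq_bigr (fun x => if (x \in X) && (x^-1 * z \in Y) then
     (#|X|%:R^-1 * #|Y|%:R^-1)%R else 0%R)); last first.
  by move=> x _; rewrite !ffunE; case: (x \in X); case: (_ \in Y);
     rewrite ?mulr0 ?mul0r.
rewrite -big_mkcond /= sumr_const.
have XY_gt0 : (0 < #|(X * Y)%g|)%N.
  by apply/card_gt0P; exists 1; apply/mulsgP; exists 1 1; rewrite ?mulg1.
case: ifP => [/mulsgP[x0 y0 Xx0 Yy0 ->] | nXYz].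
  have ->: #|[pred x | (x \in X) && (x^-1 * (x0 * y0) \in Y)]| = #|X :&: Y|.
    rewrite -(card_lcoset _ x0); apply: eq_card => x.
    rewrite mem_lcoset !inE mulgA groupMr // -[x^-1 * x0 \in Y]groupV invMg invgK.
    by rewrite (groupMl _ (groupVr Xx0)).
  have cardXY : (#|X :&: Y|%:R : rat) = (#|X|%:R * #|Y|%:R / #|(X * Y)%g|%:R)%R.
    rewrite -natrM mul_cardG natrM mulrC mulKf //.
    by rewrite pnatr_eq0 -lt0n.
  rewrite -[(_ *+ #|X :&: Y|)%R]mulr_natr cardXY; field.
  by rewrite !pnatr_eq0 -!lt0n XY_gt0 !cardG_gt0.
rewrite eq_card0 ?mulr0n // => x; rewrite !inE; apply/negP => /andP[Xx Yx].
by move: nXYz; rewrite -(mulKVg x z) => /negP; apply; apply/mulsgP; exists x (x^-1 * z).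
Qed.

Lemma gprod_commute s y : {in s, forall f, gmul f y = gmul y f} ->
  gmul (gprod s) y = gmul y (gprod s).
Proof.
elim: s => [|f s IHs] cfy /=; first by rewrite gmul1l gmul1r.
rewrite gmulA IHs => [|h hs]; last by rewrite cfy // inE hs orbT.
by rewrite -gmulA cfy ?mem_head // gmulA.
Qed.

Lemma gprod_mul_eq0 s y : {in s, forall f, gmul f y = gmul y f} ->
  (exists2 f, f \in s & gmul f y = 0%R) -> gmul (gprod s) y = 0%R.
Proof.
elim: s => [|f s IHs] cfy [h]; first by rewrite in_nil.
have cfy' : {in s, forall k, gmul k y = gmul y k}.
  by move=> k ks; rewrite cfy // inE ks orbT.
rewrite inE => /orP[/eqP-> | hs] hy0 /=.
  by rewrite gmulA (gprod_commute cfy') -gmulA hy0 gmul0l.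
by rewrite gmulA IHs ?gmul0r //; exists h.
Qed.

Lemma gprod_mulr_id s y : s != [::] -> {in s, forall f, gmul f y = f} ->
  gmul (gprod s) y = gprod s.
Proof.
elim: s => [|f [|f' s] IHs] // _ fy /=; first by rewrite gmul1r fy ?mem_head.
rewrite gmulA -[gmul f' _]/(gprod (f' :: s)) IHs // => k ks.
by rewrite fy // inE ks orbT.
Qed.

Lemma gprod_mull_id s y : s != [::] -> {in s, forall f, gmul y f = f} ->
  gmul y (gprod s) = gprod s.
Proof. by case: s => // f s _ yf; rewrite /= -gmulA yf ?mem_head. Qed.

Lemma gconj_gprod s g : gconj (gprod s) g = gprod [seq gconj f g | f <- s].
Proof. by elim: s => [|f s IHs] /=; rewrite ?gconj1 // gconjM IHs. Qed.

End GroupAlgebra.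

Lemma sub_conjg_norm (gT : finGroupType) (A : {group gT}) x :
  A :^ x \subset A -> x \in 'N(A).
Proof. by move=> sAxA; apply/normP/eqP; rewrite eqEcard sAxA cardJg leqnn. Qed.

Section Epsilon.
Variable gT : finGroupType.

Definition eps_factors (H K : {group gT}) : {set {group gT}} :=
  [set L : {group gT} | [&& K \subset L, L <| H & minnormal (L / K) (H / K)]].

Lemma gepsE (H K : {group gT}) : H != K ->
  geps H K = gprod [seq (ghat K - ghat L)%R | L : {group gT} <- enum (eps_factors H K)].
Proof. by rewrite /geps => /negbTE->. Qed.

Variables H K : {group gT}.
Hypothesis nsKH : K <| H.

Lemma eps_factor_sub (X : {group gT}) (M : {group coset_of K}) :
    K \subset X -> X \subset H -> minnormal M (H / K) -> M \subset X / K ->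
  exists2 L : {group gT}, L \in eps_factors H K & L \subset X.
Proof.
move=> sKX sXH minM sMX.
have nsKX : K <| X by apply: normalS nsKH.
have /mingroupP[/andP[_ nMH] _] := minM.
exists (coset K @*^-1 M)%G; last by rewrite -(quotientGK nsKX) cosetpreSK.
rewrite inE /= sub_cosetpre cosetpreK minM andbT.
rewrite -(quotientGK nsKH) cosetpre_normal /normal nMH andbT.
exact: subset_trans sMX (quotientS _ sXH).
Qed.

Lemma eps_factors_neq0 : H != K -> eps_factors H K != set0.
Proof.
move=> neHK; have ntHK : H / K != 1.
  apply: contraNneq neHK => trivHK; apply/eqP/val_inj/eqP.
  by rewrite eqEsubset (normal_sub nsKH) -quotient_sub1 ?(normal_norm nsKH) ?trivHK ?subxx.
have [M minM sMH] := minnormal_exists ntHK (normG _).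
have [L EL _] := eps_factor_sub (normal_sub nsKH) (subxx H) minM sMH.
by apply/set0Pn; exists L.
Qed.

Let eps_list_neq_nil : H != K ->
  [seq (ghat K - ghat L)%R | L : {group gT} <- enum (eps_factors H K)] != [::].
Proof. by move/eps_factors_neq0; rewrite -size_eq0 size_map -cardE cards_eq0. Qed.

Lemma geps_mul_ghatK : gmul (geps H K) (ghat K) = geps H K.
Proof.
have [eHK | neHK] := eqVneq H K; first by rewrite /geps eHK eqxx ghatM mulGid.
rewrite gepsE //; apply: gprod_mulr_id; first exact: eps_list_neq_nil.
move=> f /mapP[L]; rewrite mem_enum inE => /and3P[sKL _ _] ->.
by rewrite gmulBl !ghatM mulGid mulGSid.
Qed.

Lemma ghatK_mul_geps : gmul (ghat K) (geps H K) = geps H K.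
Proof.
have [eHK | neHK] := eqVneq H K; first by rewrite /geps eHK eqxx ghatM mulGid.
rewrite gepsE //; apply: gprod_mull_id; first exact: eps_list_neq_nil.
move=> f /mapP[L]; rewrite mem_enum inE => /and3P[sKL _ _] ->.
by rewrite gmulBr !ghatM mulGid mulSGid.
Qed.

Lemma geps_mul_ghat_eq0 (X : {group gT}) : abelian (H / K) ->
  K \subset X -> X \subset H -> ~~ (X \subset K) -> gmul (geps H K) (ghat X) = 0%R.
Proof.
move=> abHK sKX sXH sXK'; have [eHK | neHK] := eqVneq H K.
  by rewrite -eHK sXH in sXK'.
have nKX : X \subset 'N(K) := subset_trans sXH (normal_norm nsKH).
rewrite gepsE //; apply: gprod_mul_eq0.
  move=> f /mapP[L]; rewrite mem_enum inE => /and3P[sKL nsLH _] ->.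
  by rewrite gmulBl gmulBr !ghatM (normC nKX) (normC (subset_trans sXH (normal_norm nsLH))).
have ntXK : X / K != 1.
  by apply: contraNneq sXK' => trivXK; rewrite -quotient_sub1 ?trivXK ?subxx.
have nXKH : H / K \subset 'N(X / K).
  exact/cents_norm/(sub_abelian_cent abHK)/quotientS.
have [M minM sMX] := minnormal_exists ntXK nXKH.
have [L EL sLX] := eps_factor_sub sKX sXH minM sMX.
exists (ghat K - ghat L)%R; first by apply: map_f; rewrite mem_enum.
move: EL; rewrite inE => /and3P[sKL _ _].
by rewrite gmulBl !ghatM !mulSGid // subrr.
Qed.

Lemma geps_mul_gconj_eq0 (Y : {group gT}) g : abelian (H / K) ->
    Y \subset K -> Y :^ g^-1 \subset H -> ~~ (Y :^ g^-1 \subset K) ->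
  gmul (geps H K) (gconj (geps H K) g) = 0%R.
Proof.
move=> abHK sYK sYgH sYgK'.
have nKYg : (Y :^ g^-1)%G \subset 'N(K) := subset_trans sYgH (normal_norm nsKH).
have hatYg_eps : gmul (ghat (Y :^ g^-1)) (gconj (geps H K) g) = gconj (geps H K) g.
  rewrite -gconj_ghat -gconjM -{1}ghatK_mul_geps -gmulA ghatM.
  by rewrite (mulSGid sYK) ghatK_mul_geps.
have -> : gmul (geps H K) (gconj (geps H K) g) =
    gmul (gmul (geps H K) (ghat (K <*> (Y :^ g^-1)%G))) (gconj (geps H K) g).
  by rewrite norm_joinEr // -ghatM !gmulA hatYg_eps -gmulA geps_mul_ghatK.
rewrite (geps_mul_ghat_eq0 abHK) ?gmul0l ?joing_subl //.
  by rewrite join_subG (normal_sub nsKH).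
by apply: contra sYgK' => /(subset_trans (joing_subr _ _)).
Qed.

Lemma geps_gconj_orth (G A : {group gT}) g : abelian (H / K) ->
    A <| G -> A \subset H -> 'N_G(A :&: K) \subset 'N(H) ->
    g \in G -> g \notin 'N(K) ->
  gmul (geps H K) (gconj (geps H K) g) = 0%R.
Proof.
move=> abHK nsAG sAH nHNAK Gg nKg'.
have nAg : g^-1 \in 'N(A) by rewrite groupV (subsetP (normal_norm nsAG)).
have [nAKg | nAKg'] := boolP (g \in 'N(A :&: K)).
  have nHg : g^-1 \in 'N(H) by rewrite (subsetP nHNAK) // inE !groupV Gg nAKg.
  apply: (@geps_mul_gconj_eq0 K) => //.
    by rewrite -(normP nHg) conjSg normal_sub.
  by apply: contra nKg' => /sub_conjg_norm; rewrite groupV.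
have sAKgA : (A :&: K) :^ g^-1 \subset A by rewrite -{2}(normP nAg) conjSg subsetIl.
apply: (@geps_mul_gconj_eq0 (A :&: K)%G) => //=.
- exact: subsetIr.
- exact: subset_trans sAKgA sAH.
apply: contra nAKg' => sAKgK.
by rewrite -groupV sub_conjg_norm // subsetI sAKgA.
Qed.

Hypothesis cycHK : cyclic (H / K).

(* L / K is the only subgroup of its order in the cyclic group H / K. *)
Lemma conjg_eps_factor (L : {group gT}) x : x \in 'N(K) -> x \in 'N(H) ->
  L \in eps_factors H K -> L :^ x = L.
Proof.
move=> nKx nHx; rewrite inE => /and3P[sKL nsLH _].
have nsKL : K <| L := normalS sKL (normal_sub nsLH) nsKH.
have sLxH : L :^ x \subset H by rewrite -(normP nHx) conjSg normal_sub.
have nsKLx : K <| (L :^ x)%G.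
  by apply: normalS sLxH nsKH; rewrite -(normP nKx) conjSg.
have eLKx : (L :^ x)%G / K = L / K.
  apply/eqP; rewrite (eq_subG_cyclic cycHK) ?quotientS ?(normal_sub nsLH) //=.
  by rewrite !card_quotient ?normal_norm // -!divgS ?normal_sub // cardJg.
by rewrite -(quotientGK nsKLx) -(quotientGK nsKL) /= eLKx.
Qed.

Lemma gconj_geps_id g : g \in 'N(K) -> g \in 'N(H) -> gconj (geps H K) g = geps H K.
Proof.
rewrite -(groupV _ g) -[g \in 'N(H)]groupV => nKg nHg.
have [eHK | neHK] := eqVneq H K; first by rewrite /geps eHK eqxx gconj_ghat (normP nKg).
rewrite gepsE // gconj_gprod -map_comp; congr foldr; apply/eq_in_map => L.
rewrite mem_enum => EL /=.
by rewrite gconjB !gconj_ghat (normP nKg) (conjg_eps_factor nKg nHg EL).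
Qed.

End Epsilon.

Lemma strong_Shoda_pair_of_orth (gT : finGroupType) (G H K : {group gT}) :
    K <| H -> H \subset G -> 'N_G(K) \subset 'N(H) -> cyclic (H / K) ->
    [max (H / K)%G of B | (B \subset 'N_G(K) / K) && abelian B] ->
    {in G, forall g, g \notin 'N(K) -> gmul (geps H K) (gconj (geps H K) g) = 0%R} ->
  strong_Shoda_pair G H K.
Proof.
move=> nsKH sHG nHNK cycHK maxHK orth; split=> //.
  by rewrite /normal subsetI sHG normal_norm.
move=> g1 g2 Gg1 Gg2; set g := g1^-1 * g2.
have Gg : g \in G by rewrite groupM ?groupV.
have -> : gconj (geps H K) g2 = gconj (gconj (geps H K) g) g1 by rewrite gconjJ mulKVg.
have [nKg | nKg'] := boolP (g \in 'N(K)).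
  by rewrite (gconj_geps_id nsKH cycHK nKg) ?eqxx // (subsetP nHNK) // inE Gg.
by rewrite -gconjM orth // gconj0.
Qed.

Section LinearCharacters.
Variable gT : finGroupType.

Lemma lin_char_cfdot_neq0_eq (A : {group gT}) (phi psi : 'CF(A)) :
  phi \is a linear_char -> psi \is a linear_char -> ('[phi, psi] != 0)%R -> phi = psi.
Proof.
move=> /lin_char_irr/irrP[i ->] /lin_char_irr/irrP[j ->].
by rewrite cfdot_irr; case: (i =P j) => [-> // | _]; rewrite eqxx.
Qed.

Lemma cyclic_quotient_cfker_lin (H : {group gT}) (theta : 'CF(H)) :
  theta \is a linear_char -> cyclic (H / cfker theta).
Proof.
move=> lin_theta; have ZthetaH : ('Z(theta))%CF = H.
  apply/eqP; rewrite eqEsubset cfcenter_sub; apply/subsetP => x Hx.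
  by rewrite char_cfcenterE ?lin_charW // normC_lin_char // lin_char1.
by have := cfcenter_cyclic theta; rewrite ZthetaH.
Qed.

Lemma commg_sub_cfker_invariant (A B : {group gT}) (theta : 'CF(A)) :
    A <| B -> theta \is a linear_char -> (forall b, b \in B -> (theta ^ b)%CF = theta) ->
  [~: A, B] \subset cfker theta.
Proof.
move=> nsAB lin_theta inv_theta; rewrite gen_subG.
apply/subsetP => _ /imset2P[a b Aa Bb ->].
have nAb : b \in 'N(A) by rewrite (subsetP (normal_norm nsAB)).
have Aab : a ^ b \in A by rewrite memJ_norm.
rewrite /= cfkerEchar ?lin_charW // inE groupM ?groupV //=.
rewrite lin_charM ?groupV // lin_charV // lin_char1 //.
have -> : theta (a ^ b) = theta a.
  by rewrite -{2}(inv_theta b^-1) ?groupV // cfConjgE ?groupV // invgK.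
by rewrite mulVf ?lin_char_neq0.
Qed.

Lemma norm_cfker_invariant (A B : {group gT}) (theta : 'CF(A)) :
  A <| B -> (forall b, b \in B -> (theta ^ b)%CF = theta) -> B \subset 'N(cfker theta).
Proof.
move=> nsAB inv_theta; apply/subsetP => b Bb.
have nAb : b \in 'N(A) by rewrite (subsetP (normal_norm nsAB)).
by apply/normP; rewrite -cfker_conjg // inv_theta.
Qed.

(* Modulo ker theta, the subgroup A is central in B, so it can be joined to Ac. *)
Lemma calA_spec_sub (t : triple gT) (Ac : {group gT}) :
    tA t <| tH t -> ttheta t \is a linear_char ->
    (forall h, h \in tH t -> (ttheta t ^ h)%CF = ttheta t) -> calA_spec t Ac ->
  tA t \subset Ac.
Proof.
case: t => B A theta /= nsAB lin_theta inv_theta [nsAcB sKAc abAc maxAc].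
have sKA := commg_sub_cfker_invariant nsAB lin_theta inv_theta.
have nKB := norm_cfker_invariant nsAB inv_theta.
have nAB := normal_sub nsAB; have sAcB := normal_sub nsAcB.
have sKAAc : cfker theta \subset A <*> Ac := subset_trans sKAc (joing_subr _ _).
have abAAc : abelian ((A <*> Ac) / cfker theta).
  rewrite quotientY ?(subset_trans nAB nKB) ?(subset_trans sAcB nKB) //.
  rewrite abelianY abAc /= /abelian.
  rewrite quotient_cents2r ?(subset_trans (commgSS (subxx A) nAB) sKA) //=.
  by rewrite quotient_cents2r // commGC (subset_trans (commgSS (subxx A) sAcB) sKA).
have := maxAc _ (normalY nsAB nsAcB) sKAAc abAAc.
have sAcAAc : Ac \subset A <*> Ac := joing_subr _ _.
move=> leAAc; have /eqP-> : Ac == A <*> Ac :> {set gT} by rewrite eqEcard sAcAAc.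
exact: joing_subl.
Qed.

Lemma lin_char_conjg_id (H : {group gT}) (theta : 'CF(H)) b :
    theta \is a linear_char -> b \in 'N(H) -> b \in 'N(cfker theta) ->
    coset (cfker theta) b \in 'C(H / cfker theta) ->
  (theta ^ b)%CF = theta.
Proof.
move=> lin_theta nHb nKb cHKb; apply/cfun_inP => x Hx; rewrite cfConjgE //.
have nKx : x \in 'N(cfker theta) := subsetP (normal_norm (cfker_normal theta)) x Hx.
have Kxb : [~ x, b^-1] \in cfker theta.
  apply: coset_idr; first by rewrite groupR ?groupV.
  rewrite morphR ?groupV // morphV //; apply/eqP/commgP/commuteV.
  by apply: commute_sym; apply: (centP cHKb); apply: mem_quotient.
by rewrite -(mulKVg x (x ^ b^-1)) -/(commg x b^-1) cfkerMr.
Qed.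

(* Elements of N_G(ker theta) centralising H / ker theta fix theta, hence lie in H. *)
Lemma quotient_cfker_max_abelian (G H : {group gT}) (theta : 'CF(H)) :
    theta \is a linear_char -> H \subset G -> 'N_G(cfker theta) \subset 'N(H) ->
    {in G, forall b, b \in 'N(H) -> (theta ^ b)%CF = theta -> b \in H} ->
  [max (H / cfker theta)%G of B | (B \subset 'N_G(cfker theta) / cfker theta) && abelian B].
Proof.
move=> lin_theta sHG nHNK stab_theta; set K := cfker theta.
have nsKH : K <| H := cfker_normal theta.
apply/maxgroupP; split.
  rewrite quotientS ?subsetI ?sHG ?normal_norm //=.
  exact/cyclic_abelian/cyclic_quotient_cfker_lin.
move=> B /andP[sBNK abB] sHKB.
have nsKNK : K <| 'N_G(K) by rewrite normal_subnorm (subset_trans (normal_sub nsKH)).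
have sB'NK : coset K @*^-1 B \subset 'N_G(K) by rewrite -(quotientGK nsKNK) cosetpreSK.
have sB'H : coset K @*^-1 B \subset H.
  apply/subsetP => b B'b; have NKb := subsetP sB'NK b B'b.
  have /setIP[Gb nKb] := NKb; have nHb := subsetP nHNK b NKb.
  apply: stab_theta => //; apply: lin_char_conjg_id => //.
  have /morphpreP[_ Bb] := B'b.
  exact: subsetP (sub_abelian_cent abB sHKB) _ Bb.
apply/eqP; rewrite eqEsubset sHKB andbT.
by rewrite -(cosetpreK B) quotientS.
Qed.

End LinearCharacters.

Section PathToLeaf.
Variables (gT : finGroupType) (G N : {group gT}).
Variables (chA : triple gT -> {group gT}) (chL : forall t : triple gT, 'CF(chA t) -> Prop).
Variables (v : nat -> triple gT) (n : nat).
Hypothesis calA_chA : forall t, NLinTriple G N t -> calA_spec t (chA t).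
Hypothesis reps_chL : forall t, NLinTriple G N t -> reps_spec G N t (@chL t).
Hypothesis v0 : v 0 = @Triple gT G N (1%R : 'CF(N)).
Hypothesis v_lin : forall i, i < n -> NLinTriple G N (v i).
Hypothesis v_edge : forall i, i.+1 < n -> Cl_edge chL (v i) (v i.+1).

Lemma path_edge i : i.+1 < n ->
  [/\ tA (v i.+1) = chA (v i), tH (v i.+1) = ('I_(tH (v i))[ttheta (v i.+1)])%G
    & LinT G N (ttheta (v i)) (ttheta (v i.+1))].
Proof.
move=> lt_i1n; have [_ [phi rep_phi ->]] := v_edge lt_i1n.
have [reps_lin _ _] := reps_chL (v_lin (ltnW lt_i1n)).
by split=> //; apply: reps_lin rep_phi.
Qed.

Lemma path_res_step i : i.+1 < n ->
  tA (v i) \subset tA (v i.+1) /\ ('Res[tA (v i)] (ttheta (v i.+1)) = ttheta (v i))%R.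
Proof.
move=> lt_i1n; have [eA _ [lin_next dot_next _]] := path_edge lt_i1n.
have [_ nsAH lin_theta inv_theta _] := v_lin (ltnW lt_i1n).
have := calA_spec_sub nsAH lin_theta inv_theta (calA_chA (v_lin (ltnW lt_i1n))).
rewrite -eA => sAA1; split=> //.
exact: lin_char_cfdot_neq0_eq (cfRes_lin_char _ lin_next) lin_theta dot_next.
Qed.

Lemma path_res j k : j <= k -> k < n ->
  tA (v j) \subset tA (v k) /\ ('Res[tA (v j)] (ttheta (v k)) = ttheta (v j))%R.
Proof.
elim: k => [|k IHk] le_jk lt_kn.
  by move: le_jk; rewrite leqn0 => /eqP->; rewrite cfRes_id.
have [-> | ne_jk1] := eqVneq j k.+1; first by rewrite cfRes_id.
have le_jk' : j <= k by rewrite -ltnS ltn_neqAle ne_jk1.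
have [sAjk res_jk] := IHk le_jk' (ltnW lt_kn).
have [sAk1 res_k1] := path_res_step lt_kn.
by rewrite -(cfResRes _ sAjk sAk1) res_k1 res_jk (subset_trans sAjk sAk1).
Qed.

Lemma path_stabiliser k b : k < n -> b \in G -> b \in 'N(tA (v k)) ->
  (ttheta (v k) ^ b)%CF = ttheta (v k) -> forall j, j <= k -> b \in tH (v j).
Proof.
move=> lt_kn Gb nAkb fix_b; elim=> [|j IHj] le_jk; first by rewrite v0.
have lt_j1n : j.+1 < n := leq_ltn_trans le_jk lt_kn.
have Hjb := IHj (ltnW le_jk).
have [eA -> _] := path_edge lt_j1n.
have [nsAH _ _ _] := calA_chA (v_lin (ltnW lt_j1n)).
have nAb : b \in 'N(tA (v j.+1)) by rewrite eA (subsetP (normal_norm nsAH)).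
have [_ res_j1] := path_res le_jk lt_kn.
by rewrite inE Hjb inE nAb -res_j1 cfConjgRes_norm // fix_b eqxx.
Qed.

End PathToLeaf.

Theorem corollary3 (gT : finGroupType) (G N : {group gT})
    (chA : triple gT -> {group gT})
    (chL : forall t : triple gT, 'CF(chA t) -> Prop)
    (H : {group gT}) (theta : 'CF(H))
    (H2 A2 : {group gT}) (theta2 : 'CF(A2))
    (v : nat -> triple gT) (n : nat) :
  classC G -> N <| G ->
  (* the fixed choices defining the graph G_N *)
  (forall t, NLinTriple G N t -> calA_spec t (chA t)) ->
  (forall t, NLinTriple G N t -> reps_spec G N t (chL t)) ->
  (* v 0, ..., v (n-1) is the directed path in G_N from the root to the leaf *)
  (2 <= n)%N ->
  v 0%N = @Triple gT G N (1%R : 'CF(N)) ->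
  (forall i, (i < n)%N -> NLinTriple G N (v i)) ->
  (forall i, (i.+1 < n)%N -> Cl_edge chL (v i) (v i.+1)) ->
  v n.-1 = @Triple gT H H theta ->
  v 1%N = @Triple gT H2 A2 theta2 ->
  H <| 'N_G(cfker theta2) ->
  strong_Shoda_pair G H (cfker theta).
Proof.
move=> _ _ calA_chA reps_chL n_ge2 v0 v_lin v_edge v_leaf v1 nsHNK2.
have lt_leaf : n.-1 < n by rewrite ltn_predL (ltnW n_ge2).
have le1_leaf : 1 <= n.-1 by rewrite -subn1 subn_gt0.
have := v_lin _ lt_leaf; rewrite v_leaf => -[/= sHG _ lin_theta _ _].
have [sA2H res_theta] : A2 \subset H /\ ('Res[A2] theta = theta2)%R.
  by have := path_res calA_chA reps_chL v_lin v_edge le1_leaf lt_leaf; rewrite v_leaf v1.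
have nsA2G : A2 <| G.
  have [eA _ _] := path_edge reps_chL v_lin v_edge n_ge2.
  have [nsAG _ _ _] := calA_chA _ (v_lin 0 (ltnW n_ge2)).
  by move: nsAG; rewrite -eA v0 v1.
have stab_theta : {in G, forall b, b \in 'N(H) -> (theta ^ b)%CF = theta -> b \in H}.
  move=> b Gb nHb fix_b.
  have := path_stabiliser calA_chA reps_chL v0 v_lin v_edge lt_leaf Gb.
  by rewrite v_leaf => /(_ nHb fix_b n.-1 (leqnn _)); rewrite v_leaf.
have kerA2 : A2 :&: cfker theta = cfker theta2 by rewrite -res_theta cfker_Res ?lin_charW.
have nHNAK : 'N_G(A2 :&: cfker theta) \subset 'N(H) by rewrite kerA2 normal_norm.
have nHNK : 'N_G(cfker theta) \subset 'N(H).
  apply: subset_trans nHNAK; rewrite subsetI subsetIl normsI ?subsetIr //.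
  exact: subset_trans (subsetIl _ _) (normal_norm nsA2G).
have cyc_theta := cyclic_quotient_cfker_lin lin_theta.
apply: strong_Shoda_pair_of_orth => //; first exact: cfker_normal.
  exact: quotient_cfker_max_abelian.
move=> g Gg; apply: (geps_gconj_orth (cfker_normal theta) _ nsA2G) => //.
exact: cyclic_abelian.
Qed.
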